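(* Let $\mathcal{G}\in\mathcal{G}_2^{sym}$. Then there exists a sequence $\mathcal{K}_1=\mathcal{G}^{(1)}\rightarrow\mathcal{G}^{(2)}\rightarrow\cdots\rightarrow\mathcal{G}^{(n)}=\mathcal{G}$ of elements of $\mathcal{G}_2^{sym}$ such that for all $2\le i\le n$, $\mathcal{G}^{(i)}$ is obtained from $\mathcal{G}^{(i-1)}$ by a symmetric $2$-tree $j$-extension for some $j\in\{0,1\}$.
   Context: A multi-graph is finite and loop-free, possibly with parallel edges. A $2$-tree decomposition is $(G;T_1,T_2)$ with $G$ a multi-graph and $T_1,T_2$ spanning trees of $G$ whose edge sets partition $E(G)$. Let $\mathbb{Z}_2=\langle s\rangle$. A $\mathbb{Z}_2$-symmetric multi-graph is a pair $(G,\theta)$ with $\theta:\mathbb{Z}_2\to\mathrm{Aut}(G)$ a non-trivial homomorphism; write $s_\theta=\theta(s)$ and for an edge $e=v_1v_2$, $s_\theta(e)=s_\theta(v_1)s_\theta(v_2)$. A vertex $v$ (edge $e$) is fixed if $s_\theta(v)=v$ ($s_\theta(e)=e$). A symmetric $2$-tree decomposition is $(G;T_1,T_2;\theta)$ where $(G;T_1,T_2)$ is a $2$-tree decomposition, $(G,\theta)$ is $\mathbb{Z}_2$-symmetric and $s_\theta(T_i)=T_i$ for $i=1,2$. $\mathcal{G}_2^{sym}$ denotes the set of symmetric $2$-tree decompositions with no fixed edges, together with $\mathcal{K}_1=(K_1;T_1,T_2;\theta)$ where $K_1$ is a single vertex, the $T_i$ are edgeless and $\theta$ is trivial. For $d\in\{1,2\}$: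 $(G',\theta')$ is obtained from $(G,\theta)$ by a symmetric $d$-dimensional $0$-extension if $V(G')=V(G)\cup\{v,s_{\theta'}(v)\}$ with $v,s_{\theta'}(v)\notin V(G)$ distinct, $s_{\theta'}|_{V(G)}=s_\theta$, and $E(G')=E(G)+\{vv_i,s_{\theta'}(vv_i):i=1,\dots,d\}$ for some not necessarily distinct $v_1,\dots,v_d\in V(G)$; it is obtained by a symmetric $d$-dimensional $1$-extension if the first two conditions hold and there are $v_1,\dots,v_{d+1}\in V(G)$ with $e=v_1v_2\in E(G)$ (otherwise not necessarily distinct) such that $E(G')=E(G)-\{e,s_\theta(e)\}+\{vv_i,s_{\theta'}(vv_i):i=1,\dots,d+1\}$. A symmetric $2$-tree decomposition $(G';T_1',T_2';\theta')$ is obtained from $(G;T_1,T_2;\theta)$ by a symmetric $2$-tree $j$-extension ($j\in\{0,1\}$) if $(G',\theta')$ is obtained from $(G,\theta)$ by a symmetric $2$-dimensional $j$-extension and, for $i=1,2$, $(T_i',\theta')$ is obtained from $(T_i,\theta)$ (with the restricted automorphisms) by a symmetric $1$-dimensional $k_i$-extension with the same new vertices, where $k_i\in\{0,1\}$ and $k_1+k_2=j$. *)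

From mathcomp Require Import all_boot.
Set Implicit Arguments.
Unset Strict Implicit.
Unset Printing Implicit Defensive.

(* Edges are 2-element subsets {u,v} of the vertex type T. *)

Definition tadj (T : finType) (E : {set {set T}}) : rel T :=
  fun u v => [set u; v] \in E.

Definition is_tree (T : finType) (V : {set T}) (E : {set {set T}}) : Prop :=
  V != set0 /\
  (forall e : {set T}, e \in E -> (#|e| == 2) && (e \subset V)) /\
  {in V &, forall u v, connect (tadj E) u v} /\
  (forall c : seq T, uniq c -> 2 < size c -> ~~ cycle (tadj E) c).

(* A candidate symmetric 2-tree decomposition (G;T1,T2;theta):
   vertex set V(G), the involution s_theta (as a map on vertices),
   and the edge sets of the two trees.  The multigraph G is the edge-disjoint
   union of T1 and T2, i.e. its edge multiset is T1 + T2. *)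
Record sd (T : finType) := SD {
  sV : {set T};
  ss : T -> T;
  sT1 : {set {set T}};
  sT2 : {set {set T}} }.

Definition multG (T : finType) (D : sd T) (x : {set T}) : nat :=
  (x \in sT1 D) + (x \in sT2 D).

Definition mT (T : finType) (E : {set {set T}}) (x : {set T}) : nat :=
  x \in E.

(* symmetric 2-tree decomposition: T1,T2 spanning trees of G,
   theta : Z2 -> Aut(G) a non-trivial homomorphism (s_theta an involutive
   automorphism of G, different from the identity), s_theta(T_i) = T_i. *)
Definition is_sym_2tree (T : finType) (D : sd T) : Prop :=
  is_tree (sV D) (sT1 D) /\ is_tree (sV D) (sT2 D) /\
  {in sV D, forall x, ss D x \in sV D} /\
  {in sV D, forall x, ss D (ss D x) = x} /\
  (exists2 x : T, x \in sV D & ss D x != x) /\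
  (forall e : {set T}, e \subset sV D -> multG D (ss D @: e) = multG D e) /\
  [set ss D @: e | e : {set T} in sT1 D] = sT1 D /\
  [set ss D @: e | e : {set T} in sT2 D] = sT2 D.

Definition no_fixed_edges (T : finType) (D : sd T) : Prop :=
  forall e : {set T}, e \in sT1 D :|: sT2 D -> ss D @: e != e.

Definition is_K1 (T : finType) (D : sd T) : Prop :=
  exists x, sV D = [set x] /\ sT1 D = set0 /\ sT2 D = set0 /\ ss D x = x.

Definition in_G2sym (T : finType) (D : sd T) : Prop :=
  (is_sym_2tree D /\ no_fixed_edges D) \/ is_K1 D.

(* (V',s',m') is obtained from (V,s,m) by a symmetric d-dimensional
   j-extension (j = 0 or 1), where m, m' are edge multiplicity functions.
   ws = [v_1; ...; v_(d+j)];  for j = 1, e = v_1 v_2 must be an edge and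
   the edges {e, s(e)} are removed. *)
Definition sym_ext (T : finType) (d j : nat) (V : {set T}) (s : T -> T)
    (m : {set T} -> nat) (V' : {set T}) (s' : T -> T) (m' : {set T} -> nat)
    : Prop :=
  exists (v : T) (ws : seq T),
    v \notin V /\ s' v \notin V /\ s' v != v /\
    V' = V :|: [set v; s' v] /\ {in V, s' =1 s} /\
    size ws = d + j /\ all (fun w => w \in V) ws /\
    let A := flatten [seq [:: [set v; w]; [set s' v; s' w]] | w <- ws] in
    let e := [set nth v ws 0; nth v ws 1] in
    let R := if j == 0 then [::] else undup [:: e; s @: e] in
    (j != 0 -> 0 < m e) /\
    (forall x, m' x + count_mem x R = m x + count_mem x A).

Definition sym_2tree_ext (T : finType) (j : nat) (D D' : sd T) : Prop :=
  exists k1 k2 : nat, k1 <= 1 /\ k2 <= 1 /\ k1 + k2 = j /\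
    sym_ext 2 j (sV D) (ss D) (multG D) (sV D') (ss D') (multG D') /\
    sym_ext 1 k1 (sV D) (ss D) (mT (sT1 D)) (sV D') (ss D') (mT (sT1 D')) /\
    sym_ext 1 k2 (sV D) (ss D) (mT (sT2 D)) (sV D') (ss D') (mT (sT2 D')).

Definition sd_eq (T : finType) (D D' : sd T) : Prop :=
  sV D = sV D' /\ {in sV D, ss D =1 ss D'} /\
  sT1 D = sT1 D' /\ sT2 D = sT2 D'.

(* Both spanning trees have |V| - 1 edges,
   and an involution of a tree with no fixed edge fixes at most one vertex, so a
   degree count yields a vertex v with s v <> v and deg_T1 v + deg_T2 v <= 3.
   Delete v and s v: in a tree where v has degree 1, drop the two pendant edges at
   v and s v; in a tree where v has degree 2 with neighbours b, c, replace the
   paths b v c and (s b) (s v) (s c) by the edges bc and (s b)(s c).  Both trees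
   stay symmetric spanning trees without fixed edges, and the original
   decomposition is recovered by a symmetric 2-tree j-extension with
   j = deg_T1 v + deg_T2 v - 2. *)

From mathcomp Require Import all_boot zify.
Set Implicit Arguments.
Unset Strict Implicit.
Unset Printing Implicit Defensive.

Section TwoSets.
Variable T : finType.
Implicit Types (a b c d : T) (e : {set T}).

Lemma eq_set2 a b c d :
  [set a; b] = [set c; d] -> (a = c /\ b = d) \/ (a = d /\ b = c).
Proof.
move=> E.
have ha : a \in [set c; d] by rewrite -E !inE eqxx.
have hb : b \in [set c; d] by rewrite -E !inE eqxx orbT.
have hc : c \in [set a; b] by rewrite E !inE eqxx.
have hd : d \in [set a; b] by rewrite E !inE eqxx orbT.
move: ha hb hc hd; rewrite !inE.
case/orP=> /eqP ha; case/orP=> /eqP hb; subst; auto;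
  case/orP=> /eqP hc; case/orP=> /eqP hd; subst; auto.
Qed.

Lemma set2_injr a b c : [set a; b] = [set a; c] -> b = c.
Proof. by case/eq_set2 => [[_ ->]|[<- <-]]. Qed.

Lemma imset_set2 (f : T -> T) a b : f @: [set a; b] = [set f a; f b].
Proof. by rewrite imsetU1 imset_set1. Qed.

Lemma cards2_neq a b : #|[set a; b]| == 2 -> a != b.
Proof. by rewrite cards2; case: (a != b). Qed.

Lemma cards2_mem e v : #|e| == 2 -> v \in e -> exists w, e = [set v; w] /\ v != w.
Proof.
case/cards2P=> [x [y [xy ->]]]; rewrite !inE => /orP[]/eqP->.
  by exists y.
by exists x; split; [rewrite setUC | rewrite eq_sym].
Qed.

Lemma set_neq_mem (X Y : {set T}) z : z \in X -> z \notin Y -> X != Y.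
Proof. by move=> zX; apply: contraNneq => <-. Qed.

Lemma imsetK_in (V : {set T}) (s : T -> T) e :
  {in V, involutive s} -> e \subset V -> s @: (s @: e) = e.
Proof.
move=> inv sub; rewrite -imset_comp; apply/setP=> x.
apply/imsetP/idP => [[y ye ->]|xe]; first by rewrite /= inv // (subsetP sub).
by exists x => //=; rewrite inv // (subsetP sub).
Qed.

End TwoSets.

Section Trees.
Variable T : finType.
Implicit Types (V : {set T}) (E : {set {set T}}) (a b c u v w x y z : T).

Lemma tadj_sym E : symmetric (tadj E).
Proof. by move=> a b; rewrite /tadj setUC. Qed.

Lemma tadjD1 E e u w : tadj (E :\ e) u w -> tadj E u w.
Proof. by rewrite /tadj !inE => /andP[]. Qed.

Lemma path_suffix (e : rel T) x p s1 z t :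
  x :: p = s1 ++ z :: t -> path e x p -> path e z t.
Proof.
case: s1 => [[-> ->] //|x' s1' [-> ->]].
by rewrite cat_path => /andP[_ /= /andP[]].
Qed.

Lemma connect_lift (e e' : rel T) (f : T -> T) x y :
  (forall a b, e a b -> connect e' (f a) (f b)) ->
  connect e x y -> connect e' (f x) (f y).
Proof.
move=> H /connectP[p]; elim: p x => [|z p IH] x /=; first by move=> _ ->.
by case/andP=> exz pz ly; apply: connect_trans (H _ _ exz) (IH _ pz ly).
Qed.

Lemma connect_subset E1 E2 a b :
  {subset E1 <= E2} -> connect (tadj E1) a b -> connect (tadj E2) a b.
Proof. by move=> sub; apply: (connect_lift (f := id)) => x y /sub xy; apply: connect1. Qed.

Definition edges_in V E := forall e, e \in E -> (#|e| == 2) && (e \subset V).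

Definition acyclic E :=
  forall c : seq T, uniq c -> 2 < size c -> ~~ cycle (tadj E) c.

Definition all_bridges E :=
  forall a b, [set a; b] \in E -> ~~ connect (tadj (E :\ [set a; b])) a b.

Definition btree V E :=
  [/\ V != set0, edges_in V E, {in V &, forall u v, connect (tadj E) u v}
    & all_bridges E].

Lemma edge_neq V E a b : edges_in V E -> [set a; b] \in E -> a != b.
Proof. by move=> ok /ok /andP[/cards2_neq]. Qed.

Lemma edge_in V E a b : edges_in V E -> [set a; b] \in E -> (a \in V) && (b \in V).
Proof. by move=> ok /ok /andP[_ /subsetP s]; rewrite !s // !inE eqxx ?orbT. Qed.

Lemma acyclic_all_bridges V E : edges_in V E -> acyclic E -> all_bridges E.
Proof.
move=> ok nc a b ab; apply/negP => /connectP[p pth].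
have anb := edge_neq ok ab.
case/shortenP: pth => p' pth' uq _ lst.
case: p' pth' uq lst => [|y [|z q]] /=.
- by move=> _ _ ba; rewrite ba eqxx in anb.
- by move=> /andP[h _] _ ba; move: h; rewrite -ba /tadj !inE eqxx.
move=> pth uq lst.
apply: (negP (nc (a :: y :: z :: q) uq isT)).
rewrite /cycle rcons_path; apply/andP; split.
  have pth' : path (tadj (E :\ [set a; b])) a [:: y, z & q] by [].
  by apply: sub_path pth' => u w /tadjD1.
by rewrite /= -lst /tadj setUC.
Qed.

Lemma all_bridges_acyclic V E : edges_in V E -> all_bridges E -> acyclic E.
Proof.
move=> ok ac [|x [|y q]] // uq sz; apply/negP.
rewrite /cycle rcons_path => /andP[/andP[exy pq] ebx].
move: uq; rewrite /= !inE negb_or => /andP[/andP[xy xq] /andP[yq uq]].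
have xb : [set x; last y q] \in E by rewrite setUC.
apply: (negP (ac x _ xb)); apply/connectP; exists (y :: q); last by [].
rewrite /=; apply/andP; split.
  move: exy; rewrite /tadj !inE => ->; rewrite andbT; apply/negP.
  move=> /eqP/eq_set2 [[_ yb]|[xb' _]].
    move: sz yq yb; case: q {pq ebx xb xq uq} => [//|z q'] _ yq /= yb.
    by move: (mem_last z q'); rewrite -yb (negbTE yq).
  by move: (mem_last y q); rewrite -xb' inE (negbTE xy) (negbTE xq).
apply: (sub_in_path (P := mem (y :: q)) (e := tadj E)) => //; last by apply/allP.
move=> u w ui wi euw; rewrite /tadj in euw; rewrite /tadj !inE euw andbT.
apply/negP => /eqP E'; have : x \in [set u; w] by rewrite E' !inE eqxx.
by rewrite !inE => /orP[]/eqP xe; subst;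
  [move: ui | move: wi]; rewrite inE (negbTE xy) (negbTE xq).
Qed.

Lemma is_tree_btree V E : is_tree V E <-> btree V E.
Proof.
split; first by case=> [nz [ok [cn nc]]]; split=> //; apply: acyclic_all_bridges ok nc.
by case=> nz ok cn ac; do 3 split => //; apply: all_bridges_acyclic ok ac.
Qed.

End Trees.

Definition pendant (T : finType) (E : {set {set T}}) (u w : T) :=
  [set u; w] \in E /\ {in E, forall e : {set T}, u \in e -> e = [set u; w]}.

Definition deg (T : finType) (E : {set {set T}}) (v : T) := #|[set e in E | v \in e]|.

Section BTrees.
Variables (T : finType) (V : {set T}) (E : {set {set T}}).
Hypothesis trVE : btree V E.
Implicit Types (a b c u v w x y z : T).

Let ok : edges_in V E. Proof. by case: trVE. Qed.
Let cn : {in V &, forall u v, connect (tadj E) u v}. Proof. by case: trVE. Qed.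
Let ac : all_bridges E. Proof. by case: trVE. Qed.

Lemma btree_pendantD u w : pendant E u w -> btree (V :\ u) (E :\ [set u; w]).
Proof.
case=> uw leaf; have uw' := edge_neq ok uw.
case/andP: (edge_in ok uw) => uV wV.
have nu e : e \in E :\ [set u; w] -> u \notin e.
  rewrite !inE => /andP[ne eE]; apply/negP => ue.
  by rewrite (leaf e eE ue) eqxx in ne.
split; first by apply/set0Pn; exists w; rewrite !inE eq_sym uw' wV.
- move=> e eE'; have := nu e eE'; move: eE'; rewrite !inE => /andP[_ /ok /andP[-> sV]] ue.
  apply/subsetP => z ze; rewrite !inE (subsetP sV _ ze) andbT.
  by apply: contraNneq ue => <-.
- move=> x y; rewrite !inE => /andP[xu xV] /andP[yu yV].
  have := connect_lift (f := fun z => if z == u then w else z) _ (cn xV yV).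
  rewrite (negbTE xu) (negbTE yu); apply=> a b eab.
  have ab_u a' b' : tadj E a' b' -> a' = u -> b' = w.
    move=> e' au; rewrite /tadj au in e'.
    by case/eq_set2: (leaf _ e' (setU11 _ _)) => [[_ ->]|[uw2 _]] //; rewrite uw2 eqxx in uw'.
  have wu : (w == u) = false by apply/negbTE; rewrite eq_sym.
  case: (eqVneq a u) => [au|au].
    by rewrite (ab_u _ _ eab au) wu; apply: connect0.
  case: (eqVneq b u) => [bu|bu].
    by rewrite tadj_sym in eab; rewrite -(ab_u _ _ eab bu); apply: connect0.
  apply: connect1; rewrite /tadj !inE; rewrite /tadj in eab; rewrite eab andbT.
  apply/negP => /eqP/eq_set2[[au' _]|[_ bu']]; first by rewrite au' eqxx in au.
  by rewrite bu' eqxx in bu.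
- move=> a b; rewrite !inE => /andP[_ abE]; apply/negP => C.
  apply: (negP (ac abE)); apply: connect_subset C => x; rewrite !inE.
  by case/andP=> -> /andP[].
Qed.

Lemma btree_no_triangle a b c :
  [set a; b] \in E -> [set b; c] \in E -> [set a; c] \notin E.
Proof.
move=> ab bc; apply/negP => acE.
have nab := edge_neq ok ab; have nbc := edge_neq ok bc.
apply: (negP (ac acE)).
apply: (connect_trans (y := b)); apply: connect1; rewrite /tadj !inE ?ab ?bc andbT;
  apply/negP => /eqP/eq_set2.
  by case=> [[_ bc']|[ac' ba]]; [rewrite bc' eqxx in nbc | rewrite ba eqxx in nab].
by case=> [[ba _]|[bc' _]]; [rewrite ba eqxx in nab | rewrite bc' eqxx in nbc].
Qed.

Section Smoothing.
Variables v b c : T.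
Hypotheses (bc : b != c) (vb : [set v; b] \in E) (vc : [set v; c] \in E).
Hypothesis deg2 : {in E, forall e : {set T}, v \in e -> e = [set v; b] \/ e = [set v; c]}.

Local Notation E' := ((E :\ [set v; b] :\ [set v; c]) :|: [set [set b; c]]).

Let nvb : v != b. Proof. exact: edge_neq ok vb. Qed.
Let nvc : v != c. Proof. exact: edge_neq ok vc. Qed.
Let vV : v \in V. Proof. by case/andP: (edge_in ok vb). Qed.
Let bV : b \in V. Proof. by case/andP: (edge_in ok vb). Qed.
Let cV : c \in V. Proof. by case/andP: (edge_in ok vc). Qed.

Let nv e : e \in E -> e != [set v; b] -> e != [set v; c] -> v \notin e.
Proof.
move=> eE n1 n2; apply/negP => ve.
by case: (deg2 eE ve) => eq; [rewrite eq eqxx in n1 | rewrite eq eqxx in n2].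
Qed.

Let nb z : [set v; z] \in E -> z = b \/ z = c.
Proof.
move=> zE; case: (deg2 zE (setU11 _ _)) => /eq_set2.
  by case=> [[_ ->]|[vb' _]]; [left | case/negP: nvb; rewrite vb'].
by case=> [[_ ->]|[vc' _]]; [right | case/negP: nvc; rewrite vc'].
Qed.

Let memE' (e : {set T}) : (e \in E') =
  ((e != [set v; c]) && (e != [set v; b]) && (e \in E)) || (e == [set b; c]).
Proof. by rewrite !inE andbA. Qed.

Let smooth_edges_in : edges_in (V :\ v) E'.
Proof.
move=> e; rewrite memE' => /orP[/andP[/andP[n2 n1] eE]|/eqP->].
  case/andP: (ok eE) => -> sV /=.
  apply/subsetP => z ze; rewrite !inE (subsetP sV _ ze) andbT.
  by apply: contraNneq (nv eE n1 n2) => <-.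
rewrite cards2 bc /=; apply/subsetP => z; rewrite !inE.
by case/orP=> /eqP->; rewrite ?(eq_sym _ v) ?nvb ?nvc ?bV ?cV.
Qed.

(* Contracting [v b] maps every walk of E to a walk of E'. *)
Let smooth_connected : {in V :\ v &, forall x y, connect (tadj E') x y}.
Proof.
move=> x y; rewrite !inE => /andP[xv xV] /andP[yv yV].
have := connect_lift (f := fun z => if z == v then b else z) _ (cn xV yV).
rewrite (negbTE xv) (negbTE yv); apply=> a a' eaa.
have bv : (b == v) = false by apply/negbTE; rewrite eq_sym.
have cv : (c == v) = false by apply/negbTE; rewrite eq_sym.
have bcE' : tadj E' b c by rewrite /tadj memE' eqxx orbT.
case: (eqVneq a v) => [av|av].
  rewrite /tadj av in eaa; case: (nb eaa) => ->; rewrite ?eqxx ?bv ?cv.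
    exact: connect0.
  exact: connect1.
case: (eqVneq a' v) => [av'|av'].
  rewrite tadj_sym /tadj av' in eaa; case: (nb eaa) => ->; rewrite ?eqxx ?bv ?cv.
    exact: connect0.
  by apply: connect1; rewrite tadj_sym.
apply: connect1; rewrite /tadj memE'; rewrite /tadj in eaa; rewrite eaa andbT.
apply/orP; left; apply/andP; split; apply/negP => /eqP/eq_set2;
  case=> [[h _]|[_ h]]; by rewrite ?h eqxx in av av'.
Qed.

Let smooth_all_bridges : all_bridges E'.
Proof.
move=> a a'; rewrite memE' => /orP[/andP[/andP[n2 n1] eE]|/eqP eq].
  apply/negP => C; apply: (negP (ac eE)).
  have vn := nv eE n1 n2.
  have vz z : z \in [:: b; c] -> tadj (E :\ [set a; a']) z v.
    rewrite !inE => zbc; rewrite /tadj !inE setUC.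
    apply/andP; split; first by apply: contraNneq vn => <-; rewrite setU11.
    by case/orP: zbc => /eqP->.
  apply: (connect_lift (f := id) _ C) => x y; rewrite /tadj in_setD1.
  case/andP=> nxy; rewrite memE' => /orP[/andP[_ xyE]|/eqP/eq_set2 h].
    by apply: connect1; rewrite /tadj !inE nxy xyE.
  have [hx hy] : x \in [:: b; c] /\ y \in [:: b; c].
    by case: h => [[-> ->]|[-> ->]]; rewrite !inE !eqxx ?orbT.
  apply: (connect_trans (y := v)); apply: connect1; first exact: vz.
  by move: (vz y hy); rewrite /tadj setUC.
apply/negP => C.
have C' : connect (tadj (E :\ [set v; b])) a a'.
  apply: connect_subset C => x; rewrite in_setD1 => /andP[nx]; rewrite memE'.
  case/orP => [/andP[/andP[_ n1] xE]|/eqP xbc]; first by rewrite in_setD1 n1 xE.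
  by rewrite xbc eq eqxx in nx.
have C2 : connect (tadj (E :\ [set v; b])) b c.
  by move: C'; case/eq_set2: eq => [[-> ->]|[-> ->]] //; rewrite (sym_connect_sym (tadj_sym _)).
apply: (negP (ac vb)); rewrite (sym_connect_sym (tadj_sym _)).
apply: (connect_trans C2); apply: connect1.
rewrite /tadj !inE setUC vc andbT; apply/negP => /eqP/eq_set2.
by case=> [[_ cb]|[vb' _]]; [case/negP: bc; rewrite cb | case/negP: nvb; rewrite vb'].
Qed.

Lemma btree_smooth : btree (V :\ v) E'.
Proof.
split=> //; apply/set0Pn; exists b; rewrite !inE bV andbT.
by apply: contraNneq nvb => ->.
Qed.

End Smoothing.


Lemma pendant_of_path k x p : #|T| <= size p + k -> p != [::] ->
  uniq (x :: p) -> path (tadj E) x p -> exists u w, pendant E u w.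
Proof.
have nc := all_bridges_acyclic ok ac.
elim: k x p => [|k IH] x p.
  rewrite addn0 => le _ /card_uniqP uq _.
  by have := max_card (mem (x :: p)); rewrite uq /= ltnNge le.
move=> le pn uq pth.
case: (pickP (fun z => tadj E (last x p) z && (z \notin x :: p))) =>
    [z /andP[ez zn]|none].
  apply: (IH x (rcons p z)).
  - by rewrite size_rcons addSnnS.
  - by case: (p).
  - by rewrite -rcons_cons rcons_uniq zn uq.
  - by rewrite rcons_path pth ez.
move: pn uq pth none; case/lastP: p {le IH} => [//|p1 u] _ uq pth none.
rewrite last_rcons in none.
have pu : tadj E (last x p1) u by move: pth; rewrite rcons_path => /andP[].
exists u, (last x p1); split; first by rewrite setUC.
move=> e eE ue.
case/andP: (ok eE) => e2 _.
case: (cards2_mem e2 ue) => z [ez uz].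
have zin : z \in x :: rcons p1 u.
  by have := none z; rewrite /tadj -ez eE /= => /negbFE.
have zp1 : z \in x :: p1.
  move: zin; rewrite -rcons_cons mem_rcons inE => /orP[/eqP zu|//].
  by rewrite zu eqxx in uz.
have [s1 [s2 Ep]] : exists s1 s2, x :: p1 = s1 ++ z :: s2.
  by case/splitPr: zp1 => s1 s2; exists s1, s2.
case: s2 Ep => [|y s2] Ep.
  by rewrite ez; move/(congr1 (last x)): Ep; rewrite last_cat => /= ->.
exfalso.
have eq' : x :: rcons p1 u = s1 ++ z :: y :: rcons s2 u.
  by rewrite -[x :: rcons p1 u]/(rcons (x :: p1) u) Ep rcons_cat.
have pz := path_suffix eq' pth.
have uz' : uniq (z :: y :: rcons s2 u).
  by move: uq; rewrite eq' cat_uniq => /and3P[].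
have := nc (z :: y :: rcons s2 u) uz'; rewrite /= size_rcons => /(_ isT).
apply/negP/negPn.
rewrite /cycle rcons_path; move: pz => /= /andP[-> ->] /=; rewrite last_rcons.
by rewrite /tadj -ez.
Qed.

Lemma btree_pendant : 1 < #|V| -> exists u w, pendant E u w.
Proof.
case/card_gt1P => [x [y [xV yV xy]]].
case/connectP: (cn xV yV) => [[|z p] /= pth ly]; first by rewrite ly eqxx in xy.
case/andP: pth => exz _.
apply: (pendant_of_path (k := #|T|) (x := x) (p := [:: z])) => //=.
- by rewrite inE (edge_neq ok exz).
- by rewrite exz.
Qed.

Lemma btree_deg_gt0 v : 1 < #|V| -> v \in V -> 0 < deg E v.
Proof.
case/card_gt1P => [x [y [xV yV xy]]] vV.
have [z zV zv] : exists2 z, z \in V & z != v.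
  by case: (eqVneq x v) => [xv|xv]; [exists y; rewrite // -xv eq_sym | exists x].
case/connectP: (cn vV zV) => [[|z1 p] /= pth lz]; first by rewrite lz eqxx in zv.
case/andP: pth => e1 _.
by rewrite /deg card_gt0; apply/set0Pn; exists [set v; z1]; rewrite inE setU11 andbT.
Qed.

End BTrees.

Section Degrees.
Variables (T : finType) (V : {set T}) (E : {set {set T}}).
Hypothesis ok : edges_in V E.

Lemma deg_sum : \sum_(v in V) deg E v = 2 * #|E|.
Proof.
rewrite (eq_bigr (fun v => \sum_(e in E) (v \in e))); last first.
  move=> v _; rewrite /deg -sum1_card (eq_bigl (fun e => (e \in E) && (v \in e))).
    by rewrite big_mkcondr /=; apply: eq_bigr => e _; case: (v \in e).
  by move=> e; rewrite inE.
rewrite exchange_big /= (eq_bigr (fun _ => 2)); first by rewrite sum_nat_const mulnC.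
move=> e eE; case/andP: (ok eE) => /eqP e2 sV.
rewrite -big_mkcondr /= sum1_card -e2; apply: eq_card => v.
rewrite unfold_in /=; apply/andP/idP => [[]//|ve]; split => //; exact: (subsetP sV).
Qed.

Lemma deg1_pendant v : deg E v = 1 -> exists w, pendant E v w.
Proof.
move=> /eqP/cards1P [e0 h].
have : e0 \in [set e in E | v \in e] by rewrite h set11.
rewrite inE => /andP[e0E ve0].
case/andP: (ok e0E) => e2 _.
case: (cards2_mem e2 ve0) => w [ew _].
exists w; rewrite /pendant -ew; split => // e eE ve.
have : e \in [set e in E | v \in e] by rewrite inE eE ve.
by rewrite h inE => /eqP.
Qed.

Lemma deg2_neighbours v : deg E v = 2 ->
  exists b c, [/\ b != c, [set v; b] \in E, [set v; c] \in E &
    {in E, forall e : {set T}, v \in e -> e = [set v; b] \/ e = [set v; c]}].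
Proof.
move=> /eqP/cards2P [e1 [e2 [ne h]]].
have : e1 \in [set e in E | v \in e] by rewrite h !inE eqxx.
rewrite inE => /andP[e1E ve1].
have : e2 \in [set e in E | v \in e] by rewrite h !inE eqxx orbT.
rewrite inE => /andP[e2E ve2].
case/andP: (ok e1E) => c1 _; case/andP: (ok e2E) => c2 _.
case: (cards2_mem c1 ve1) => b [eb _].
case: (cards2_mem c2 ve2) => c [ec _].
exists b, c; split; rewrite -?eb -?ec //.
  by apply: contraNneq ne => bc; rewrite eb ec bc.
move=> e eE ve.
have : e \in [set e in E | v \in e] by rewrite inE eE ve.
by rewrite h !inE => /orP[] /eqP->; [left|right].
Qed.

End Degrees.

Lemma btree_card (T : finType) (V : {set T}) (E : {set {set T}}) :
  btree V E -> #|E| = #|V|.-1.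
Proof.
have [n] := ubnP #|V|; elim: n V E => // n IH V E ltVn tr.
case: (tr) => nz ok _ _.
case: (leqP #|V| 1) => [le1|gt1].
  have -> : #|E| = 0.
    apply/eqP; rewrite cards_eq0; apply/eqP/setP => e; rewrite inE.
    apply/negP => eE; case/andP: (ok e eE) => /eqP e2 /subset_leq_card.
    by rewrite e2 => h; have := leq_trans h le1.
  by move: le1; rewrite leq_eqVlt ltnS leqn0 cards_eq0 (negbTE nz) orbF => /eqP->.
case: (btree_pendant tr gt1) => u [w leaf].
have tr' := btree_pendantD tr leaf.
case/andP: (edge_in ok leaf.1) => uV _.
have cV := cardsD1 u V; have cE := cardsD1 [set u; w] E.
rewrite uV in cV; rewrite leaf.1 in cE.
have ltV'n : #|V :\ u| < n by move: ltVn; rewrite cV.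
by rewrite cE (IH _ _ ltV'n tr') cV; move: gt1; rewrite cV; lia.
Qed.

Definition sym_tree (T : finType) (V : {set T}) (E : {set {set T}}) (s : T -> T) :=
  [/\ btree V E, {in V, forall x, s x \in V}, {in V, involutive s},
      {in E, forall e : {set T}, s @: e \in E} & {in E, forall e : {set T}, s @: e != e}].

Section SymmetricTrees.
Variables (T : finType) (s : T -> T).
Implicit Types (V e : {set T}) (E : {set {set T}}) (a b c u v w x : T).

Lemma sym_setD2 V u : {in V, forall x, s x \in V} -> {in V, involutive s} -> u \in V ->
  {in V :\ u :\ s u, forall x, s x \in V :\ u :\ s u}.
Proof.
move=> sV inv uV x; rewrite !inE => /and3P[xsu xu xV].
rewrite sV // andbT (inj_in_eq (can_in_inj inv)) // xu /=.
by rewrite -{1}(inv u uV) (inj_in_eq (can_in_inj inv)) // sV.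
Qed.

Lemma sym_tree_mem V E e : sym_tree V E s -> e \subset V -> (s @: e \in E) = (e \in E).
Proof.
case=> _ _ inv cl _ eS; apply/idP/idP => [h|]; last exact: cl.
by rewrite -(imsetK_in inv eS); apply: cl.
Qed.

Lemma sym_tree_pendantD V E u w : sym_tree V E s -> pendant E u w ->
  [/\ s u != u, w != s u, [set s u; s w] \in E, [set s u; s w] != [set u; w] &
     sym_tree (V :\ u :\ s u) (E :\ [set u; w] :\ [set s u; s w]) s].
Proof.
case=> tr sV inv cl nf [uw leaf]; case: (tr) => _ ok _ _.
case/andP: (edge_in ok uw) => uV wV.
have suu : s u != u.
  apply/negP => /eqP suu; have := cl _ uw; rewrite imset_set2 suu => h.
  by have := nf _ uw; rewrite imset_set2 suu (leaf _ h (setU11 _ _)) eqxx.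
have wsu : w != s u.
  apply/negP => /eqP wsu.
  by have := nf _ uw; rewrite imset_set2 wsu inv // setUC -wsu eqxx.
have Es : [set s u; s w] \in E by rewrite -imset_set2 cl.
have neq : [set s u; s w] != [set u; w] by rewrite -imset_set2 nf.
split => //.
have tr1 := btree_pendantD tr (conj uw leaf).
have leaf2 : pendant (E :\ [set u; w]) (s u) (s w).
  split; first by rewrite in_setD1 neq Es.
  move=> e; rewrite in_setD1 => /andP[_ eE] sue.
  have usE : u \in s @: e by rewrite -(inv u uV); apply: imset_f.
  have eS : e \subset V by case/andP: (ok _ eE).
  by rewrite -(imsetK_in inv eS) (leaf _ (cl _ eE) usE) imset_set2.
split; [exact: (btree_pendantD tr1 leaf2) | exact: sym_setD2 | | |].
- by move=> x; rewrite !inE => /and3P[_ _ xV]; apply: inv.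
- move=> e; rewrite !inE => /and3P[n2 n1 eE].
  have eS : e \subset V by case/andP: (ok _ eE).
  rewrite cl // andbT; apply/andP; split; apply/negP => /eqP h.
    by move: n1; rewrite -(imsetK_in inv eS) h imset_set2 !inv ?eqxx.
  by move: n2; rewrite -(imsetK_in inv eS) h imset_set2 eqxx.
- by move=> e; rewrite !inE => /and3P[_ _ /nf].
Qed.

End SymmetricTrees.

Section Exchange.
Variable T : finType.
Implicit Types (E : {set {set T}}) (A R : seq {set T}).

Definition exchange E A R : {set {set T}} := [set e in E | e \notin A] :|: [set e in R].

Lemma mT_exchange E A R : uniq A -> uniq R -> {subset A <= E} ->
  {in R, forall e, e \notin E} ->
  forall x, mT E x + count_mem x R = mT (exchange E A R) x + count_mem x A.
Proof.
move=> uA uR sA dR x; rewrite /mT !inE !count_uniq_mem //.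
case xA: (x \in A); case xR: (x \in R); case xE: (x \in E) => //=.
- by rewrite (sA x) in xE.
- by rewrite (sA x) in xE.
- by have := dR x xR; rewrite xE.
Qed.

Lemma exchange_nil E e1 e2 : exchange E [:: e1; e2] [::] = E :\ e1 :\ e2.
Proof. by apply/setP => x; rewrite !inE orbF; case: (x \in E); case: (x == e1); case: (x == e2). Qed.

End Exchange.

Definition ext_edges (T : finType) (s : T -> T) (v : T) (ws : seq T) : seq {set T} :=
  flatten [seq [:: [set v; w]; [set s v; s w]] | w <- ws].

Section SymmetricPruning.
Variables (T : finType) (s : T -> T).
Implicit Types (V e : {set T}) (E : {set {set T}}) (a b c u v w x : T).

Lemma sym_tree_fixed_le1 V E : sym_tree V E s -> #|[set x in V | s x == x]| <= 1.
Proof.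
have [n] := ubnP #|V|; elim: n V E => // n IH V E ltVn sy.
case: (leqP #|V| 1) => [le1|gt1].
  by apply: leq_trans le1; apply: subset_leq_card; apply/subsetP => x; rewrite inE => /andP[].
case: (sy) => tr sV inv _ _; case: (tr) => _ ok _ _.
case: (btree_pendant tr gt1) => u [w leaf].
case: (sym_tree_pendantD sy leaf) => suu _ _ _ sy2.
case/andP: (edge_in ok leaf.1) => uV _.
have c1 := cardsD1 u V; have c2 := cardsD1 (s u) (V :\ u).
rewrite uV in c1; rewrite !inE suu sV //= in c2.
apply: leq_trans (IH _ _ _ sy2); last by move: ltVn; rewrite c1 c2; lia.
apply: subset_leq_card; apply/subsetP => x; rewrite !inE => /andP[xV /eqP sx].
rewrite xV sx eqxx !andbT; apply/andP; split.
  by apply: contra_neq suu => xsu; rewrite -xsu -{1}sx xsu inv.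
by apply: contra_neq suu => xu; rewrite -xu sx.
Qed.

Lemma sym_tree_prune V E v a : sym_tree V E s -> pendant E v a ->
  let E' := exchange E (ext_edges s v [:: a]) [::] in
  [/\ sym_tree (V :\ v :\ s v) E' s, a \in V :\ v :\ s v &
      forall e, mT E e = mT E' e + count_mem e (ext_edges s v [:: a])].
Proof.
move=> sy leaf E'; have [_ asv Es neq sy'] := sym_tree_pendantD sy leaf.
have [[_ ok _ _] _ _ _ _] := sy.
split; first by rewrite /E' exchange_nil.
  case/andP: (edge_in ok leaf.1) => _ aV.
  by rewrite !inE asv aV eq_sym (edge_neq ok leaf.1).
move=> e; rewrite -[LHS]addn0; apply: (mT_exchange (R := [::])) => //.
- by rewrite /= inE eq_sym neq.
- by move=> f; rewrite !inE => /orP[]/eqP->; [exact: leaf.1|].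
Qed.

End SymmetricPruning.

Section SymmetricSmoothing.
Variables (T : finType) (s : T -> T) (V : {set T}) (E : {set {set T}}) (v b c : T).
Hypotheses (sy : sym_tree V E s) (svv : s v != v) (bc : b != c).
Hypotheses (vb : [set v; b] \in E) (vc : [set v; c] \in E).
Hypothesis deg2 : {in E, forall e : {set T}, v \in e -> e = [set v; b] \/ e = [set v; c]}.

Local Notation A := (ext_edges s v [:: b; c]).
Local Notation R := [:: [set b; c]; [set s b; s c]].
Local Notation E1 := ((E :\ [set v; b] :\ [set v; c]) :|: [set [set b; c]]).

Let tr : btree V E. Proof. by case: sy. Qed.
Let ok : edges_in V E. Proof. by case: tr. Qed.
Let sV : {in V, forall x, s x \in V}. Proof. by case: sy. Qed.
Let inv : {in V, involutive s}. Proof. by case: sy. Qed.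
Let cl : {in E, forall e : {set T}, s @: e \in E}. Proof. by case: sy. Qed.
Let nf : {in E, forall e : {set T}, s @: e != e}. Proof. by case: sy. Qed.
Let vV : v \in V. Proof. by case/andP: (edge_in ok vb). Qed.
Let bV : b \in V. Proof. by case/andP: (edge_in ok vb). Qed.
Let cV : c \in V. Proof. by case/andP: (edge_in ok vc). Qed.
Let seq_s : {in V &, forall x y, (s x == s y) = (x == y)}.
Proof. exact: inj_in_eq (can_in_inj inv). Qed.

(* b = s v would make [v; b] a fixed edge. *)
Let bsv : b != s v.
Proof. by apply: contraNneq (nf vb) => ->; rewrite imset_set2 inv // setUC. Qed.
Let csv : c != s v.
Proof. by apply: contraNneq (nf vc) => ->; rewrite imset_set2 inv // setUC. Qed.
Let sbv : s b != v. Proof. by rewrite -{1}(inv vV) seq_s // sV. Qed.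
Let scv : s c != v. Proof. by rewrite -{1}(inv vV) seq_s // sV. Qed.
Let svsbE : [set s v; s b] \in E. Proof. by rewrite -imset_set2 cl. Qed.
Let svscE : [set s v; s c] \in E. Proof. by rewrite -imset_set2 cl. Qed.
Let v_svsb : v \notin [set s v; s b]. Proof. by rewrite !inE negb_or !(eq_sym v) svv sbv. Qed.
Let v_svsc : v \notin [set s v; s c]. Proof. by rewrite !inE negb_or !(eq_sym v) svv scv. Qed.

Let memE1 e : (e \in E1) =
  ((e != [set v; c]) && (e != [set v; b]) && (e \in E)) || (e == [set b; c]).
Proof. by rewrite !inE andbA. Qed.

Let svsbE1 : [set s v; s b] \in E1.
Proof.
by rewrite memE1 svsbE !andbT !(eq_sym [set s v; _])
  (set_neq_mem (setU11 _ _) v_svsb) (set_neq_mem (setU11 _ _) v_svsb).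
Qed.

Let svscE1 : [set s v; s c] \in E1.
Proof.
by rewrite memE1 svscE !andbT !(eq_sym [set s v; _])
  (set_neq_mem (setU11 _ _) v_svsc) (set_neq_mem (setU11 _ _) v_svsc).
Qed.

Let deg2_mirror :
  {in E1, forall e : {set T}, s v \in e -> e = [set s v; s b] \/ e = [set s v; s c]}.
Proof.
move=> e; rewrite memE1 => /orP[/andP[_ eE]|/eqP ->] sve; last first.
  by move: sve; rewrite !inE !(eq_sym (s v)) (negbTE bsv) (negbTE csv).
have eS : e \subset V by case/andP: (ok eE).
have ve : v \in s @: e by rewrite -(inv vV); apply: imset_f.
by case: (deg2 (cl eE) ve) => h; [left|right]; rewrite -(imsetK_in inv eS) h imset_set2.
Qed.

Let btree_E1 : btree (V :\ v) E1. Proof. exact: btree_smooth. Qed.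

Let smooth_edges_neq : [set b; c] != [set s b; s c].
Proof.
apply/negP => /eqP h; apply: (negP (btree_no_triangle btree_E1 svsbE1 _)) svscE1.
by rewrite -h memE1 eqxx orbT.
Qed.

Let exchange_smooth :
  exchange E A R = (E1 :\ [set s v; s b] :\ [set s v; s c]) :|: [set [set s b; s c]].
Proof.
have sv_bc : s v \notin [set b; c] by rewrite !inE negb_or !(eq_sym (s v)) bsv csv.
have bc_svsb : [set b; c] != [set s v; s b] by rewrite eq_sym (set_neq_mem (setU11 _ _) sv_bc).
have bc_svsc : [set b; c] != [set s v; s c] by rewrite eq_sym (set_neq_mem (setU11 _ _) sv_bc).
apply/setP => e; rewrite /exchange /= !inE.
case: (eqVneq e [set b; c]) => [->|ne]; first by rewrite bc_svsb bc_svsc !orbT.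
rewrite ?(negbTE ne) /=.
by case: (e == [set v; b]); case: (e == [set v; c]); case: (e == [set s v; s b]);
  case: (e == [set s v; s c]); case: (e \in E); case: (e == [set s b; s c]).
Qed.

Let smooth_count (e : {set T}) : mT E e + count_mem e R = mT (exchange E A R) e + count_mem e A.
Proof.
have vinb : v \in [set v; b] by rewrite setU11.
have vinc : v \in [set v; c] by rewrite setU11.
apply: mT_exchange.
- rewrite /= !inE !negb_or (set_neq_mem vinb v_svsb) (set_neq_mem vinb v_svsc).
  rewrite (eq_sym [set s v; s b] [set v; c]) (set_neq_mem vinc v_svsb).
  rewrite (set_neq_mem vinc v_svsc) /= !andbT; apply/andP; split.
    by apply: contra_neq bc => /set2_injr.
  by apply: contra_neq bc => /set2_injr/eqP; rewrite seq_s // => /eqP.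
- by rewrite /= inE smooth_edges_neq.
- by move=> f; rewrite !inE => /or4P[] /eqP->.
move=> f; rewrite !inE => /orP[] /eqP->.
  by apply/negP => h; apply: (negP (btree_no_triangle tr vb h)) vc.
apply/negP => /cl; rewrite imset_set2 !inv // => h.
by apply: (negP (btree_no_triangle tr vb h)) vc.
Qed.

Let smooth_sym_tree : sym_tree (V :\ v :\ s v) (exchange E A R) s.
Proof.
have memE2 e : (e \in exchange E A R) = ((e \in E) && (e \notin A)) || (e \in R).
  by rewrite !inE.
have Acl f : f \in A -> s @: f \in A.
  by rewrite !inE => /or4P[] /eqP->; rewrite imset_set2 ?inv // ?eqxx ?orbT.
have sbsc : s b != s c by rewrite seq_s.
split; first by rewrite exchange_smooth; exact: (btree_smooth btree_E1 sbsc svsbE1 svscE1 deg2_mirror).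
- exact: sym_setD2.
- by move=> x; rewrite !inE => /and3P[_ _ xV]; apply: inv.
- move=> e; rewrite memE2 => /orP[/andP[eE eA]|eR].
    have eS : e \subset V by case/andP: (ok eE).
    rewrite memE2 cl //=; apply/orP; left; apply: contra eA => /Acl.
    by rewrite (imsetK_in inv eS).
  by rewrite memE2; move: eR; rewrite !inE => /orP[] /eqP->;
    rewrite imset_set2 ?inv // !eqxx ?orbT.
move=> e; rewrite memE2 => /orP[/andP[eE _]|]; first exact: nf.
by rewrite !inE => /orP[] /eqP->; rewrite imset_set2 ?inv // eq_sym smooth_edges_neq.
Qed.

Let smooth_mem : (b \in V :\ v :\ s v) && (c \in V :\ v :\ s v).
Proof.
by rewrite !inE bsv csv (eq_sym b) (eq_sym c) (edge_neq ok vb) (edge_neq ok vc) bV cV.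
Qed.

Lemma sym_tree_smooth :
  [/\ sym_tree (V :\ v :\ s v) (exchange E A R) s, b \in V :\ v :\ s v,
     c \in V :\ v :\ s v, [set b; c] != [set s b; s c] &
     forall e, mT E e + count_mem e R = mT (exchange E A R) e + count_mem e A].
Proof. by case/andP: smooth_mem; split; [exact: smooth_sym_tree | | | exact: smooth_edges_neq | exact: smooth_count]. Qed.

End SymmetricSmoothing.

Lemma sym_trees_light_vertex (T : finType) (V : {set T}) (s : T -> T) T1 T2 :
  sym_tree V T1 s -> sym_tree V T2 s -> 1 < #|V| ->
  exists v, [/\ v \in V, s v != v & deg T1 v + deg T2 v <= 3].
Proof.
move=> sy1 sy2 gt1.
case: (pickP [pred v | (v \in V) && (s v != v) && (deg T1 v + deg T2 v <= 3)]) =>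
  [v /andP[/andP[vV svv] d]|none]; first by exists v.
exfalso.
case: (sy1) => tr1 _ _ _ _; case: (sy2) => tr2 _ _ _ _.
case: (tr1) => _ ok1 _ _; case: (tr2) => _ ok2 _ _.
have H : \sum_(v in V) 4 <=
    \sum_(v in V) (deg T1 v + deg T2 v + (s v == v) + (s v == v)).
  apply: leq_sum => v vV.
  have := none v; rewrite /= vV /=.
  have := btree_deg_gt0 tr1 gt1 vV; have := btree_deg_gt0 tr2 gt1 vV.
  by case: (s v == v) => /= g2 g1; [move=> _ | move/negbT; rewrite -ltnNge]; lia.
have fixedE : \sum_(v in V) (s v == v) = #|[set x in V | s x == x]|.
  rewrite -sum1_card [RHS]big_mkcond [LHS]big_mkcond /=.
  by apply: eq_bigr => x _; rewrite inE; case: (x \in V); case: (s x == x).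
have f := sym_tree_fixed_le1 sy1.
rewrite !big_split /= sum_nat_const fixedE (deg_sum ok1) (deg_sum ok2) in H.
move: H f; rewrite (btree_card tr1) (btree_card tr2); lia.
Qed.

Section Extensions.
Variable T : finType.
Implicit Types (V : {set T}) (s : T -> T) (m : {set T} -> nat) (v b c : T).

Definition fresh_pair V V' s v :=
  [/\ v \notin V, s v \notin V, s v != v & V' = V :|: [set v; s v]].

Lemma fresh_pair_setD2 V s v :
  {in V, forall x, s x \in V} -> v \in V -> s v != v -> fresh_pair (V :\ v :\ s v) V s v.
Proof.
move=> sV vV svv; split => //; rewrite ?inE ?eqxx ?andbF //.
apply/setP => x; rewrite !inE.
case: (eqVneq x v) => [->|xv]; first by rewrite vV !orbT.
by case: (eqVneq x (s v)) => [->|xsv]; rewrite ?sV ?orbT ?orbF.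
Qed.

Lemma ext_edges_cat s v ws1 ws2 :
  ext_edges s v (ws1 ++ ws2) = ext_edges s v ws1 ++ ext_edges s v ws2.
Proof. by rewrite /ext_edges map_cat flatten_cat. Qed.

Lemma sym_ext0 V V' s m m' v ws : fresh_pair V V' s v -> all (fun w => w \in V) ws ->
  (forall e, m' e = m e + count_mem e (ext_edges s v ws)) ->
  sym_ext (size ws) 0 V s m V' s m'.
Proof.
case=> vV svV svv V'E wsV mE; exists v, ws; rewrite addn0; do 7 split => //.
by split=> // e; rewrite addn0 mE.
Qed.

Lemma sym_ext1 V V' s m m' v b c ws : fresh_pair V V' s v ->
  all (fun w => w \in V) [:: b, c & ws] -> 0 < m [set b; c] ->
  [set b; c] != [set s b; s c] ->
  (forall e, m' e + count_mem e [:: [set b; c]; [set s b; s c]] =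
             m e + count_mem e (ext_edges s v [:: b, c & ws])) ->
  sym_ext (size ws).+1 1 V s m V' s m'.
Proof.
case=> vV svV svv V'E wsV pos neq mE; exists v, [:: b, c & ws].
do 5 split => //; split; first by rewrite /= addn1.
by split => //; rewrite /= imset_set2 inE (negbTE neq).
Qed.

Lemma sym_ext_eq d j V V' s s' m1 m2 m1' m2' : m1 =1 m2 -> m1' =1 m2' ->
  sym_ext d j V s m1 V' s' m1' -> sym_ext d j V s m2 V' s' m2'.
Proof.
move=> E E' [v [ws [vV [svV [svv [V'E [ss' [sz [wsV [pos mE]]]]]]]]]].
exists v, ws; do 8 split => //; first by rewrite -E.
by move=> e; rewrite -E -E'.
Qed.

End Extensions.

Section ReductionStep.
Variables (T : finType) (V : {set T}) (s : T -> T) (T1 T2 : {set {set T}}) (v : T).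
Hypotheses (sy1 : sym_tree V T1 s) (sy2 : sym_tree V T2 s).
Hypotheses (vV : v \in V) (svv : s v != v) (d1 : 0 < deg T1 v <= 2) (d2 : deg T2 v = 1).

Lemma sym_trees_reduce_at : exists T1' T2',
  [/\ sym_tree (V :\ v :\ s v) T1' s, sym_tree (V :\ v :\ s v) T2' s &
      sym_2tree_ext (deg T1 v).-1 (SD (V :\ v :\ s v) s T1' T2') (SD V s T1 T2)].
Proof.
case: (sy1) => [[_ ok1 _ _] sV _ _ _]; case: (sy2) => [[_ ok2 _ _] _ _ _ _].
have fresh := fresh_pair_setD2 sV vV svv.
case: (deg1_pendant ok2 d2) => a leafa.
case: (sym_tree_prune sy2 leafa) => sy2' aV' cnt2.
have [d1'|d1'] : deg T1 v = 1 \/ deg T1 v = 2 by lia.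
  case: (deg1_pendant ok1 d1') => a1 leafa1.
  case: (sym_tree_prune sy1 leafa1) => sy1' a1V' cnt1.
  do 2 eexists; split; [exact: sy1' | exact: sy2' |]; rewrite d1'.
  exists 0, 0; do 3 split => //; split; last split.
  - apply: (sym_ext0 (ws := [:: a1; a]) fresh); first by rewrite /= a1V' aV'.
    move=> e; rewrite -[[:: a1; a]]/([:: a1] ++ [:: a]) ext_edges_cat count_cat.
    by rewrite -[multG _ e]/(mT T1 e + mT T2 e) (cnt1 e) (cnt2 e) addnACA.
  - by apply: (sym_ext0 (ws := [:: a1]) fresh _ cnt1); rewrite /= a1V'.
  - by apply: (sym_ext0 (ws := [:: a]) fresh _ cnt2); rewrite /= aV'.
case: (deg2_neighbours ok1 d1') => b [c [bc vb vc deg2]].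
case: (sym_tree_smooth sy1 svv bc vb vc deg2) => sy1' bV' cV' neq cnt1.
do 2 eexists; split; [exact: sy1' | exact: sy2' |]; rewrite d1'.
have bcE1 : [set b; c] \in exchange T1 (ext_edges s v [:: b; c]) [:: [set b; c]; [set s b; s c]].
  by rewrite !inE eqxx orbT.
exists 1, 0; do 3 split => //; split; last split.
- apply: (sym_ext1 (b := b) (c := c) (ws := [:: a]) fresh) => [||//|e].
  + by rewrite /= bV' cV' aV'.
  + by rewrite /multG /= bcE1.
  rewrite -[[:: b; c; a]]/([:: b; c] ++ [:: a]) ext_edges_cat count_cat.
  rewrite -[multG (SD V _ _ _) e]/(mT T1 e + mT T2 e) (cnt2 e) addnAC cnt1.
  by rewrite addnACA.
- by apply: (sym_ext1 (b := b) (c := c) (ws := [::]) fresh); rewrite /= ?bV' ?cV' /mT ?bcE1.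
- by apply: (sym_ext0 (ws := [:: a]) fresh _ cnt2); rewrite /= aV'.
Qed.

End ReductionStep.

Lemma sym_2tree_ext_swap (T : finType) j V' V (s' s : T -> T) T1' T2' T1 T2 :
  sym_2tree_ext j (SD V' s' T2' T1') (SD V s T2 T1) ->
  sym_2tree_ext j (SD V' s' T1' T2') (SD V s T1 T2).
Proof.
case=> k1 [k2 [k1le [k2le [kj [extG [ext1 ext2]]]]]].
exists k2, k1; do 3 split => //; first by rewrite addnC.
by split=> //; apply: sym_ext_eq extG => e; rewrite /multG /= addnC.
Qed.

Lemma sym_trees_in_G2sym (T : finType) (V : {set T}) (s : T -> T) T1 T2 :
  sym_tree V T1 s -> sym_tree V T2 s -> in_G2sym (SD V s T1 T2).
Proof.
move=> sy1 sy2; case: (sy1) => tr1 sV inv _ nf1; case: (sy2) => tr2 _ _ _ nf2.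
case: (tr1) => nz ok1 cn1 _; case: (tr2) => _ ok2 _ _.
have no_edges (E : {set {set T}}) x : edges_in [set x] E -> E = set0.
  move=> ok; apply/setP => e; rewrite inE; apply/negP => /ok /andP[/eqP e2].
  by move/subset_leq_card; rewrite e2 cards1.
case: (leqP #|V| 1) => [le1|gt1].
  have /cards1P [x Vx] : #|V| == 1 by rewrite eqn_leq le1 card_gt0.
  right; exists x; rewrite /= Vx in ok1 ok2 sV *.
  by rewrite (no_edges _ _ ok1) (no_edges _ _ ok2); have := sV x; rewrite !inE eqxx => /(_ isT)/eqP.
have image_eq E : sym_tree V E s -> [set s @: e | e : {set T} in E] = E.
  case=> [[_ ok _ _] _ _ cl _]; apply/setP => e; apply/imsetP/idP => [[e' e'E ->]|eE].
    exact: cl.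
  by exists (s @: e); [exact: cl | rewrite (imsetK_in inv) //; case/andP: (ok _ eE)].
left; split; last by move=> e; rewrite /= inE => /orP[]; [apply: nf1 | apply: nf2].
split; first exact/is_tree_btree.
split; first exact/is_tree_btree.
do 2 split => //; split.
  case/card_gt1P: gt1 => [x [y [xV yV xy]]].
  case/connectP: (cn1 x y xV yV) => [[|z p] /= pth ly]; first by rewrite ly eqxx in xy.
  case/andP: pth => exz _; case/andP: (edge_in ok1 exz) => _ zV.
  case: (eqVneq (s x) x) => [sx|sx]; last by exists x.
  case: (eqVneq (s z) z) => [sz|sz]; last by exists z.
  by have := nf1 _ exz; rewrite imset_set2 sx sz eqxx.
split; first by move=> e eS; rewrite /multG /= (sym_tree_mem sy1 eS) (sym_tree_mem sy2 eS).
by split; apply: image_eq.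
Qed.

Lemma sym_2tree_reduce (T : finType) (D : sd T) : is_sym_2tree D -> no_fixed_edges D ->
  exists D' j, [/\ j <= 1, in_G2sym D', #|sV D'| < #|sV D| & sym_2tree_ext j D' D].
Proof.
case: D => V s T1 T2; rewrite /is_sym_2tree /no_fixed_edges /=.
case=> t1 [t2 [sV [inv [[x0 x0V sx0] [_ [im1 im2]]]]]] nf.
have sym_of E : is_tree V E -> [set s @: e | e : {set T} in E] = E ->
    {in E, forall e : {set T}, s @: e != e} -> sym_tree V E s.
  by move=> /is_tree_btree tr im nfE; split => // e eE; rewrite -im; apply: imset_f.
have sy1 : sym_tree V T1 s by apply: sym_of => // e eE; apply: nf; rewrite inE eE.
have sy2 : sym_tree V T2 s by apply: sym_of => // e eE; apply: nf; rewrite inE eE orbT.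
have gt1 : 1 < #|V|.
  by apply/card_gt1P; exists x0, (s x0); split => //; [exact: sV | rewrite eq_sym].
case: (sym_trees_light_vertex sy1 sy2 gt1) => v [vV svv dle].
have [tr1 _ _ _ _] := sy1; have [tr2 _ _ _ _] := sy2.
have g1 := btree_deg_gt0 tr1 gt1 vV; have g2 := btree_deg_gt0 tr2 gt1 vV.
have ltV : #|V :\ v :\ s v| < #|V|.
  have c1 := cardsD1 v V; have c2 := cardsD1 (s v) (V :\ v).
  rewrite vV in c1; rewrite c1 c2; lia.
have [d2|[d1 d2]] : deg T2 v = 1 \/ deg T1 v = 1 /\ deg T2 v = 2 by lia.
  have d1 : 0 < deg T1 v <= 2 by lia.
  case: (sym_trees_reduce_at sy1 sy2 vV svv d1 d2) => T1' [T2' [sy1' sy2' ext]].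
  exists (SD (V :\ v :\ s v) s T1' T2'), (deg T1 v).-1.
  by split=> //; [lia | exact: sym_trees_in_G2sym].
have d2' : 0 < deg T2 v <= 2 by lia.
case: (sym_trees_reduce_at sy2 sy1 vV svv d2' d1) => T2' [T1' [sy2' sy1' ext]].
exists (SD (V :\ v :\ s v) s T1' T2'), (deg T2 v).-1.
by split=> //; [lia | exact: sym_trees_in_G2sym | exact: sym_2tree_ext_swap].
Qed.

Lemma G2sym_chain (T : finType) (G : sd T) : in_G2sym G ->
  exists (n : nat) (Gs : nat -> sd T),
    [/\ 1 <= n, is_K1 (Gs 1), Gs n = G,
        forall i, 1 <= i <= n -> in_G2sym (Gs i) &
        forall i, 2 <= i <= n -> exists2 j, j <= 1 & sym_2tree_ext j (Gs i.-1) (Gs i)].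
Proof.
have [N] := ubnP #|sV G|; elim: N G => // N IH G ltGN h.
case: (h) => [[sy nf]|K1]; last first.
  exists 1, (fun _ => G); split=> // i /andP[i2 i1].
  by have := leq_trans i2 i1.
case: (sym_2tree_reduce sy nf) => D' [j [jle hD' lt ext]].
have [|m [Gs [m1 K Gm inG exts]]] := IH D' _ hD'; first exact: leq_trans lt _.
exists m.+1, (fun i => if i <= m then Gs i else G).
split; rewrite ?m1 ?ltnn // => i /andP[i1 im].
  by case: ifP => // le_im; apply: inG; rewrite i1 le_im.
case: (leqP i m) => [le_im|gt_im].
  by rewrite (leq_trans (leq_pred i) le_im); apply: exts; rewrite i1 le_im.
have -> : i = m.+1 by lia.
by rewrite /= leqnn Gm; exists j.
Qed.

Theorem corollary5p7 (T : finType) (G : sd T) :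
  in_G2sym G ->
  exists (n : nat) (Gs : nat -> sd T),
    1 <= n /\ is_K1 (Gs 1) /\ sd_eq (Gs n) G /\
    (forall i, 1 <= i <= n -> in_G2sym (Gs i)) /\
    (forall i, 2 <= i <= n ->
       exists2 j, j <= 1 & sym_2tree_ext j (Gs i.-1) (Gs i)).
Proof.
case/G2sym_chain => n [Gs [n1 K Gn inG exts]].
by exists n, Gs; rewrite Gn; do 3 split => //; split.
Qed.
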